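(* Let $V$ be a finite nonempty set, $c\in\mathbb{R}^{P_V}$, $\hat x$ a maximally specific partial function on $P_V$, $U\subseteq V$, and $ij\in (U\times(V\setminus U))\setminus\operatorname{dom}(\hat x)$. If $(U\times(V\setminus U))\cap\hat x^{-1}(1)=\emptyset$ and $$c_{ij}^-\ \ge \sum_{pq\in (U\times(V\setminus U))\setminus\hat x^{-1}(0)} c_{pq}^+,$$ then there is a maximizer $x^*$ of $\varphi_c$ over $X_V[\hat x]$ with $x^*_{ij}=0$.
   Context: $P_V=\{pq\in V^2\mid p\neq q\}$; $X_V$ is the set of $x\in\{0,1\}^{P_V}$ with $x_{pq}+x_{qr}-x_{pr}\le 1$ for all pairwise distinct $p,q,r\in V$; $\varphi_c(x)=\sum_{pq\in P_V}c_{pq}x_{pq}$. A partial function $\tilde x$ is a map from $\operatorname{dom}(\tilde x)\subseteq P_V$ to $\{0,1\}$, $\tilde x^{-1}(b)$ the pairs mapped to $b$, and $X_V[\tilde x]=\{x\in X_V\mid x_{pq}=\tilde x_{pq}\ \forall pq\in\operatorname{dom}(\tilde x)\}$. A pair $pq$ is decided if $x_{pq}=x'_{pq}$ for all $x,x'\in X_V[\tilde x]$; $\tilde x$ is maximally specific if $X_V[\tilde x]\ne\emptyset$ and the decided pairs are exactly $\operatorname{dom}(\tilde x)$. For real $a$: $a^+=\max(a,0)$, $a^-=\max(-a,0)$. *)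

From HB Require Import structures.
From mathcomp Require Import all_boot all_order all_algebra.
Set Implicit Arguments. Unset Strict Implicit. Unset Printing Implicit Defensive.
Import Order.TTheory GRing.Theory Num.Theory.
Local Open Scope ring_scope.

Definition PV (V : finType) : pred (V * V) := fun pq => pq.1 != pq.2.

(* A 0/1 vector x in {0,1}^{P_V}: represented as a boolean finite function on
   V * V; entries on the diagonal are fixed to false so that vectors are in
   bijection with {0,1}^{P_V}. *)
Definition is_vec (V : finType) (x : {ffun V * V -> bool}) : bool :=
  [forall p : V, ~~ x (p, p)].

Definition in_XV (V : finType) (x : {ffun V * V -> bool}) : bool :=
  is_vec x &&
  [forall p : V, forall q : V, forall r : V,
     [&& p != q, q != r & p != r] ==>
       ((x (p, q) : nat) + x (q, r) <= 1 + x (p, r))%N].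

Definition phi (R : numDomainType) (V : finType) (c : V * V -> R)
  (x : {ffun V * V -> bool}) : R :=
  \sum_(pq : V * V | PV pq) c pq * (x pq)%:R.

Definition partial_fun (V : finType) (xt : {ffun V * V -> option bool}) : bool :=
  [forall pq : V * V, (xt pq != None) ==> PV pq].

Definition in_dom (V : finType) (xt : {ffun V * V -> option bool}) (pq : V * V) : bool :=
  xt pq != None.

Definition in_XV_restr (V : finType) (xt : {ffun V * V -> option bool})
  (x : {ffun V * V -> bool}) : Prop :=
  in_XV x /\ forall pq b, xt pq = Some b -> x pq = b.

Definition decided (V : finType) (xt : {ffun V * V -> option bool}) (pq : V * V) : Prop :=
  forall x x', in_XV_restr xt x -> in_XV_restr xt x' -> x pq = x' pq.

Definition maximally_specific (V : finType) (xt : {ffun V * V -> option bool}) : Prop :=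
  partial_fun xt /\
  (exists x, in_XV_restr xt x) /\
  (forall pq, PV pq -> (decided xt pq <-> in_dom xt pq)).

Definition pospart (R : realDomainType) (a : R) : R := Num.max a 0.
Definition negpart (R : realDomainType) (a : R) : R := Num.max (- a) 0.

From HB Require Import structures.
From mathcomp Require Import all_boot all_order all_algebra.
From mathcomp Require Import lra.
Set Implicit Arguments. Unset Strict Implicit. Unset Printing Implicit Defensive.
Import Order.TTheory GRing.Theory Num.Theory.
Local Open Scope ring_scope.

(* Take a maximizer x of phi_c over X_V[xh].  If x_ij = 1, switch off every
   pair of the cut U x (V \ U).  Since no cut pair is transitively implied by
   non-cut pairs, the result is still in X_V, and since no cut pair is fixed to
   1 it still extends xh.  The objective loses the cut weight
   c_ij + sum_{cut, pq <> ij} c_pq x_pq <= c_ij + (sum of c^+ over the free cut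
   pairs other than ij) <= c_ij - c_ij^+ + c_ij^- = 0, so it is still maximal. *)

Section Cut.

Variable V : finType.
Variable U : {set V}.

Definition cut (pq : V * V) : bool := (pq.1 \in U) && (pq.2 \notin U).

Definition cut_off (x : {ffun V * V -> bool}) : {ffun V * V -> bool} :=
  [ffun pq => x pq && ~~ cut pq].

Lemma cut_offE x pq : cut_off x pq = x pq && ~~ cut pq.
Proof. by rewrite ffunE. Qed.

Lemma noncut_trans p q r : ~~ cut (p, q) -> ~~ cut (q, r) -> ~~ cut (p, r).
Proof. by rewrite /cut /=; case: (p \in U); case: (q \in U); case: (r \in U). Qed.

Lemma in_XV_cut_off x : in_XV x -> in_XV (cut_off x).
Proof.
case/andP => /forallP diag /'forall_'forall_forallP tri; apply/andP; split.
  by apply/forallP => p; rewrite cut_offE (negbTE (diag p)).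
apply/'forall_'forall_forallP => p q r; apply/implyP => distinct.
have := implyP (tri p q r) distinct; rewrite !cut_offE.
case: (x (p, q)) (x (q, r)) (x (p, r)) => [] [] [] //=;
  case Cpq: (cut (p, q)); case Cqr: (cut (q, r)) => //=.
by rewrite (noncut_trans (negbT Cpq) (negbT Cqr)).
Qed.

Lemma in_XV_restr_cut_off (xh : {ffun V * V -> option bool}) x :
  (forall pq, cut pq -> xh pq != Some true) ->
  in_XV_restr xh x -> in_XV_restr xh (cut_off x).
Proof.
move=> cut_not_fixed1 [Xx agree]; split; first exact: in_XV_cut_off.
move=> pq b xh_pq; rewrite cut_offE (agree _ _ xh_pq).
case Cpq: (cut pq); rewrite ?andbT // andbF.
by case: b xh_pq => // xh_pq; move: (cut_not_fixed1 _ Cpq); rewrite xh_pq.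
Qed.

Lemma phi_cut_off (R : numDomainType) (c : V * V -> R) x :
  phi c x = phi c (cut_off x) + \sum_(pq | PV pq && cut pq) c pq * (x pq)%:R.
Proof.
rewrite /phi (bigID cut) [in RHS](bigID cut) /= addrC.
have -> : \sum_(pq | PV pq && cut pq) c pq * (cut_off x pq)%:R = 0.
  by apply: big1 => pq /andP[_ Cpq]; rewrite cut_offE Cpq andbF mulr0.
rewrite add0r; congr (_ + _).
by apply: eq_bigr => pq /andP[_ Cpq]; rewrite cut_offE (negbTE Cpq) andbT.
Qed.

End Cut.

Definition in_XV_restrb (V : finType) (xh : {ffun V * V -> option bool})
  (x : {ffun V * V -> bool}) : bool :=
  in_XV x && [forall pq, if xh pq is Some b then x pq == b else true].

Lemma in_XV_restrP (V : finType) (xh : {ffun V * V -> option bool}) x :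
  reflect (in_XV_restr xh x) (in_XV_restrb xh x).
Proof.
apply: (iffP andP) => -[Xx agree]; split => //.
  by move=> pq b xh_pq; move/forallP: agree => /(_ pq); rewrite xh_pq => /eqP.
by apply/forallP => pq; case xh_pq: (xh pq) => [b|] //; rewrite (agree _ _ xh_pq).
Qed.

Lemma phi_maximizer_exists (R : realDomainType) (V : finType) (c : V * V -> R)
  (xh : {ffun V * V -> option bool}) x0 :
  in_XV_restr xh x0 ->
  exists2 xm, in_XV_restr xh xm & forall x, in_XV_restr xh x -> phi c x <= phi c xm.
Proof.
move=> /in_XV_restrP X0.
have [xm /in_XV_restrP Xm xm_max] := @arg_maxP _ R _ x0 (in_XV_restrb xh) (phi c) X0.
by exists xm => // x /in_XV_restrP; apply: xm_max.
Qed.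

Lemma pospart_ge0 (R : realDomainType) (a : R) : 0 <= pospart a.
Proof. by rewrite /pospart le_max lexx orbT. Qed.

Lemma mul_bool_le_pospart (R : realDomainType) (a : R) (b : bool) :
  a * b%:R <= pospart a.
Proof. by case: b; rewrite ?mulr1 ?mulr0 /pospart le_max lexx ?orbT. Qed.

Lemma pospart_sub_negpart (R : realDomainType) (a : R) : pospart a - negpart a = a.
Proof. by rewrite /pospart /negpart /Num.max /Order.max; case: ltP => ?; case: ltP => ?; lra. Qed.

Lemma cut_weight_le0 (R : realDomainType) (V : finType) (c : V * V -> R)
  (xh : {ffun V * V -> option bool}) (U : {set V}) (i j : V) x :
  in_XV_restr xh x -> i \in U -> j \notin U -> xh (i, j) = None ->
  x (i, j) ->
  \sum_(pq : V * V | [&& pq.1 \in U, pq.2 \notin U & xh pq != Some false])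
     pospart (c pq) <= negpart (c (i, j)) ->
  \sum_(pq | PV pq && cut U pq) c pq * (x pq)%:R <= 0.
Proof.
move=> [_ agree] iU jU xh_ij x_ij budget.
have ij_cut : PV (i, j) && cut U (i, j).
  by rewrite /PV /cut /= iU jU !andbT; apply: contraNneq jU => <-.
have ij_free : [&& (i, j).1 \in U, (i, j).2 \notin U & xh (i, j) != Some false].
  by rewrite /= iU jU xh_ij.
rewrite (bigD1 (i, j) ij_cut) /= x_ij mulr1.
move: budget; rewrite (bigD1 (i, j) ij_free) /=.
set S := \sum_(pq | _ && (pq != (i, j))) pospart (c pq) => budget.
have others_le_S :
    \sum_(pq | (PV pq && cut U pq) && (pq != (i, j))) c pq * (x pq)%:R <= S.
  rewrite /S big_mkcond [leRHS]big_mkcond /=; apply: ler_sum => pq _.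
  case: ifP => [/andP[/andP[_ /andP[pU qU]] pq_ij] | _]; last first.
    by case: ifP => _; rewrite ?pospart_ge0.
  rewrite pU qU pq_ij /=.
  case xh_pq: (xh pq) => [[]|] /=; rewrite ?mul_bool_le_pospart //.
  by rewrite (agree _ _ xh_pq) mulr0.
apply: le_trans (lerD (lexx _) others_le_S) _; clearbody S.
have := pospart_sub_negpart (c (i, j)); lra.
Qed.

Theorem proposition6p2 (R : realFieldType) (V : finType) (c : V * V -> R)
  (xh : {ffun V * V -> option bool}) (U : {set V}) (i j : V) :
  (0 < #|V|)%N ->
  maximally_specific xh ->
  i \in U -> j \notin U -> xh (i, j) = None ->
  (forall p q, p \in U -> q \notin U -> xh (p, q) != Some true) ->
  negpart (c (i, j)) >=
    \sum_(pq : V * V | [&& pq.1 \in U, pq.2 \notin U & xh pq != Some false])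
       pospart (c pq) ->
  exists xs : {ffun V * V -> bool},
    [/\ in_XV_restr xh xs,
        (forall x, in_XV_restr xh x -> phi c x <= phi c xs)
      & xs (i, j) = false].
Proof.
move=> _ [_ [[x0 X0] _]] iU jU xh_ij cut_not_fixed1 budget.
have [x Xx x_max] := phi_maximizer_exists c X0.
case x_ij: (x (i, j)); last by exists x.
have cut_not_fixed1' pq : cut U pq -> xh pq != Some true.
  by case: pq => p q /andP[]; apply: cut_not_fixed1.
exists (cut_off U x); split.
- exact: in_XV_restr_cut_off.
- move=> y Xy; apply: le_trans (x_max _ Xy) _.
  rewrite (phi_cut_off U c x) gerDl.
  exact: cut_weight_le0 Xx iU jU xh_ij x_ij budget.
- by rewrite cut_offE /cut /= iU jU andbF.
Qed.
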